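(* Let $m$ and $n_0$ be positive integers and $N=mn_0+m$. For $1\le\ell\le m$ let $R_\ell=\{m+(\ell-1)n_0+1,\dots,m+\ell n_0\}$. For $1\le j\le m$ and $1\le i_1<\cdots<i_j\le m$ let $X_{i_1,\dots,i_j}=\{Z\subseteq[N]:\ \{i_1,\dots,i_j\}\cup R_1\cup\cdots\cup R_{j-1}\subseteq Z\subseteq \{i_1,\dots,i_j\}\cup R_1\cup\cdots\cup R_j\}$. For any coloring $c$ of $\mathcal{B}_N$, if $\mathcal{B}_N$ contains no rainbow induced copy of $\mathcal{B}_m$, then there exist $j$ and $1\le i_1<\cdots<i_j\le m$ such that the restriction of $c$ to $X_{i_1,\dots,i_j}$ uses at most $2^m-1$ colors.
   Context: $\mathcal{B}_N$ is the Boolean lattice of subsets of $[N]$ under inclusion. A coloring assigns a color to each set (any number of colors allowed). An induced copy of a poset $\mathcal{P}$ in $\mathcal{B}_N$ is the image of an injection $f$ with $f(X)\subseteq f(Y)$ iff $X\le Y$; it is rainbow if its sets have pairwise distinct colors. *)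

(* Ground set [N] = {1..N} is modelled by 'I_N, the element
   k+1 of [N] being represented by the ordinal of value k (0-based shift). *)
From mathcomp Require Import all_boot all_order.
Set Implicit Arguments. Unset Strict Implicit. Unset Printing Implicit Defensive.

Definition induced_copy (m N : nat) (f : {set 'I_m} -> {set 'I_N}) : Prop :=
  injective f /\ forall X Y : {set 'I_m}, (f X \subset f Y) = (X \subset Y).

Definition rainbow (N m : nat) (C : eqType) (c : {set 'I_N} -> C)
    (f : {set 'I_m} -> {set 'I_N}) : Prop :=
  injective (fun X => c (f X)).

Definition has_rainbow_copy (m N : nat) (C : eqType) (c : {set 'I_N} -> C) : Prop :=
  exists f : {set 'I_m} -> {set 'I_N}, induced_copy f /\ rainbow c f.

Definition ncolors (N : nat) (C : eqType) (c : {set 'I_N} -> C)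
    (F : {set {set 'I_N}}) : nat :=
  size (undup [seq c Z | Z <- enum F]).

(* R_1 ∪ ... ∪ R_k = {m+1, ..., m+k n0} (1-based), i.e. values m .. m+k*n0-1 (0-based). *)
Definition Runion (N m n0 k : nat) : {set 'I_N} :=
  [set x : 'I_N | (m <= x) && (x < m + k * n0)].

(* X_{i_1..i_j} for I = {i_1,...,i_j} (0-based, subset of {0..m-1}), j = #|I|. *)
Definition Xfam (N m n0 : nat) (I : {set 'I_N}) : {set {set 'I_N}} :=
  [set Z : {set 'I_N} | (I :|: Runion N m n0 (#|I| - 1)) \subset Z &
                        Z \subset (I :|: Runion N m n0 #|I|)].

(** If every family [X_I] with [∅ ≠ I ⊆ [m]] sees at least [2^m] colours, a
   rainbow copy of [B_m] can be built greedily: send [∅] to [∅] and each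
   nonempty [S ⊆ [m]] to some [Z_S ∈ X_S] whose colour differs from [c ∅] and
   from the colours already chosen, which is possible since at most [2^m - 1]
   colours are forbidden at each step.  The copy is induced because
   [Z_S ∩ [m] = S], and for [S ⊊ T] we have
   [Z_S ⊆ S ∪ R_1 ∪ … ∪ R_|S| ⊆ T ∪ R_1 ∪ … ∪ R_(|T|-1) ⊆ Z_T]. *)

From mathcomp Require Import all_boot all_order.

Set Implicit Arguments.
Unset Strict Implicit.
Unset Printing Implicit Defensive.

Section GreedyColouring.
Variables (N : nat) (C : eqType) (c : {set 'I_N} -> C).

Lemma ncolors_avoid (F : {set {set 'I_N}}) (U : seq C) :
  size U < ncolors c F -> exists2 Z, Z \in F & c Z \notin U.
Proof.
have [/hasP[Z] | /hasPn allU] := boolP (has (fun Z => c Z \notin U) (enum F)).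
  by rewrite mem_enum; exists Z.
rewrite ltnNge => /negP[]; apply: uniq_leq_size (undup_uniq _) _ => y.
by rewrite mem_undup => /mapP[Z ZF ->]; have := allU Z ZF; rewrite negbK.
Qed.

Lemma rainbow_choice (T : eqType) (F : T -> {set {set 'I_N}}) (s : seq T)
    (U : seq C) :
  (forall t, t \in s -> size U + size s <= ncolors c (F t)) ->
  exists g : T -> {set 'I_N}, [/\ forall t, t \in s -> g t \in F t,
    forall t, t \in s -> c (g t) \notin U &
    {in s &, injective (fun t => c (g t))}].
Proof.
elim: s U => [|t s IHs] U manyF; first by exists (fun=> set0).
have [Z FtZ cZU] : exists2 Z, Z \in F t & c Z \notin U.
  apply: ncolors_avoid; apply: leq_trans (manyF t (mem_head _ _)).
  by rewrite addnS ltnS leq_addr.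
have [|g [Fg gU g_inj]] := IHs (c Z :: U).
  by move=> u su; rewrite /= addSn -addnS; apply: manyF; rewrite inE su orbT.
exists (fun u => if u == t then Z else g u); split.
- by move=> u; rewrite inE; case: eqP => [->|_] // /Fg.
- by move=> u; rewrite inE; case: eqP => // _ /gU; rewrite inE negb_or => /andP[].
- move=> u v; rewrite !inE.
  case: (eqVneq u t) => [->|ut]; case: (eqVneq v t) => [->|vt] //= su sv.
  + by move=> cZv; have := gU v sv; rewrite -cZv mem_head.
  + by move=> cuZ; have := gU u su; rewrite cuZ mem_head.
  + exact: g_inj.
Qed.

End GreedyColouring.

Section Xfamilies.
Variables (N m n0 : nat).

Lemma Runion_mono k k' : k <= k' -> Runion N m n0 k \subset Runion N m n0 k'.
Proof.
move=> le_kk'; apply/subsetP => x; rewrite !inE => /andP[-> ltx] /=.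
by apply: leq_trans ltx _; rewrite leq_add2l leq_mul2r le_kk' orbT.
Qed.

Lemma Xfam_trace (I Z : {set 'I_N}) (x : 'I_N) :
  Z \in Xfam m n0 I -> x < m -> (x \in Z) = (x \in I).
Proof.
rewrite inE => /andP[IZ ZI] ltxm; apply/idP/idP => [xZ|xI].
  by move: (subsetP ZI x xZ); rewrite !inE leqNgt ltxm orbF.
by apply: (subsetP IZ); rewrite inE xI.
Qed.

Lemma Xfam_proper_sub (I J Z W : {set 'I_N}) :
  I \proper J -> Z \in Xfam m n0 I -> W \in Xfam m n0 J -> Z \subset W.
Proof.
move=> ltIJ; rewrite !inE => /andP[_ ZI] /andP[JW _].
apply: subset_trans ZI (subset_trans _ JW); apply: setUSS.
  exact: proper_sub ltIJ.
apply: Runion_mono; rewrite -ltnS subn1 prednK ?proper_card //.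
by apply: leq_ltn_trans (proper_card ltIJ).
Qed.

End Xfamilies.

Lemma widen_ord_inj m n (le_mn : m <= n) : injective (widen_ord le_mn).
Proof. by move=> x y /(congr1 val) /= /val_inj. Qed.

Section RainbowCopy.
Variables (m N n0 : nat) (le_mN : m <= N) (C : eqType) (c : {set 'I_N} -> C).

Let e : 'I_m -> 'I_N := widen_ord le_mN.
Let e_inj : injective e := @widen_ord_inj m N le_mN.

Lemma induced_copy_of_trace (f : {set 'I_m} -> {set 'I_N}) :
  (forall S x, (e x \in f S) = (x \in S)) ->
  {homo f : S T / S \subset T} -> induced_copy f.
Proof.
move=> trace f_mono.
have f_sub S T : (f S \subset f T) = (S \subset T).
  apply/idP/idP => [fST|]; last exact: f_mono.
  by apply/subsetP => x; rewrite -!trace; apply: (subsetP fST).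
by split=> // S T fST; apply/eqP; rewrite eqEsubset -!f_sub fST subxx.
Qed.

Lemma rainbow_copy_of_many_colours :
  (forall S : {set 'I_m}, S != set0 -> 2 ^ m <= ncolors c (Xfam m n0 (e @: S))) ->
  has_rainbow_copy m c.
Proof.
move=> many.
pose s := enum [set~ set0 : {set 'I_m}].
have mem_s S : (S \in s) = (S != set0) by rewrite mem_enum !inE.
have size_s : size s = 2 ^ m - 1.
  by rewrite -cardE cardsC1 -cardsT -powersetT card_powerset cardsT card_ord subn1.
have [|g [Xg gU g_inj]] := rainbow_choice (c := c) (s := s) (U := [:: c set0])
  (F := fun S : {set 'I_m} => Xfam m n0 (e @: S)).
  by move=> S; rewrite mem_s size_s /= add1n subn1 prednK ?expn_gt0 //; apply: many.
pose f S := if S == set0 then set0 else g S.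
have Xf S : S != set0 -> f S \in Xfam m n0 (e @: S).
  by move=> S0; rewrite /f (negbTE S0) Xg ?mem_s.
have cf S : S != set0 -> c (f S) != c set0.
  by move=> S0; rewrite /f (negbTE S0); have := gU S; rewrite mem_s inE => /(_ S0).
exists f; split; first apply: induced_copy_of_trace.
- move=> S x; have [->|S0] := eqVneq S set0; first by rewrite /f eqxx !inE.
  by rewrite (Xfam_trace (Xf S S0)) ?(mem_imset _ _ e_inj) //; apply: ltn_ord x.
- move=> S T ST; have [->|S0] := eqVneq S set0; first by rewrite /f eqxx sub0set.
  have [<-|neST] := eqVneq S T; first exact: subxx.
  have ltST : S \proper T by rewrite properEneq neST.
  have T0 : T != set0 by apply: contraNneq S0 => T0; rewrite -subset0 -T0.
  apply: (Xfam_proper_sub _ (Xf S S0) (Xf T T0)).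
  by rewrite properEcard imsetS ?(card_imset _ e_inj) ?proper_card.
- move=> S T; have [->|S0] := eqVneq S set0; have [->|T0] := eqVneq T set0 => //.
  + by rewrite {1}/f eqxx => /esym/eqP; rewrite (negbTE (cf T T0)).
  + by rewrite {2}/f eqxx => /eqP; rewrite (negbTE (cf S S0)).
  + by rewrite /f (negbTE S0) (negbTE T0); apply: g_inj; rewrite mem_s.
Qed.

End RainbowCopy.

Theorem lemma4p1 (m n0 N : nat) (hm : 0 < m) (hn0 : 0 < n0) (hN : N = m * n0 + m)
    (C : eqType) (c : {set 'I_N} -> C) :
  ~ has_rainbow_copy m c ->
  exists (j : nat) (I : {set 'I_N}),
    [/\ 1 <= j <= m, #|I| = j, (forall x : 'I_N, x \in I -> x < m) &
        ncolors c (@Xfam N m n0 I) <= 2 ^ m - 1].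
Proof.
move=> no_rainbow.
have le_mN : m <= N by rewrite hN leq_addl.
pose e := widen_ord le_mN.
have [/existsP[S /andP[S0 few]] | /existsPn many] :=
  boolP [exists S : {set 'I_m},
           (S != set0) && (ncolors c (Xfam m n0 (e @: S)) <= 2 ^ m - 1)].
  exists #|S|, (e @: S); split=> //.
  - by rewrite card_gt0 S0 /= (leq_trans (max_card _)) ?card_ord.
  - by rewrite card_imset //; apply: widen_ord_inj.
  - by move=> _ /imsetP[x _ ->]; apply: ltn_ord x.
case: no_rainbow; apply: (rainbow_copy_of_many_colours (n0 := n0)) => S S0.
by have := many S; rewrite S0 /= -ltnNge subn1 prednK ?expn_gt0.
Qed.
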